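(* Let $A\in\mathbb Z^{d\times n}$ with $\ker(A)\cap\mathbb N^n=\{0\}$. Suppose $b\in\ker(A)$ reduces the distance of a nonzero $x\in\ker(A)$, and $z\in\ker(A)$ has a conformal decomposition $z=x+y$ with $y\in\ker(A)$. Then $b$ reduces the distance of $z$.
   Context: For $z\in\mathbb Z^n$, $z^\pm\in\mathbb N^n$ are the unique vectors with disjoint supports and $z=z^+-z^-$; $\|\cdot\|$ is the $1$-norm. $z=x+y$ is a conformal decomposition if $z^+=x^++y^+$ and $z^-=x^-+y^-$. For nonzero $w\in\ker(A)$, $b\in\ker(A)$ reduces the distance of $w$ if there exist $(p,q)\in\{(w^+,w^-),(w^-,w^+)\}$ and $\varepsilon\in\{\pm1\}$ with $p+\varepsilon b\in\mathbb N^n$ and $\|p+\varepsilon b-q\|<\|w\|$. *)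

From HB Require Import structures.
From mathcomp Require Import all_boot all_order all_algebra.
Set Implicit Arguments. Unset Strict Implicit. Unset Printing Implicit Defensive.
Import Order.TTheory GRing.Theory Num.Theory.
Local Open Scope ring_scope.

Definition vpos n (z : 'cV[int]_n) : 'cV[int]_n := \col_i Num.max (z i 0) 0.
Definition vneg n (z : 'cV[int]_n) : 'cV[int]_n := \col_i Num.max (- z i 0) 0.

Definition norm1 n (z : 'cV[int]_n) : int := \sum_i `|z i 0|.

Definition nonneg n (z : 'cV[int]_n) : Prop := forall i, 0 <= z i 0.

Definition inker d n (A : 'M[int]_(d, n)) (z : 'cV[int]_n) : Prop := A *m z = 0.

Definition conformal n (z x y : 'cV[int]_n) : Prop :=
  z = x + y /\ vpos z = vpos x + vpos y /\ vneg z = vneg x + vneg y.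

Definition reduces_dist d n (A : 'M[int]_(d, n)) (b w : 'cV[int]_n) : Prop :=
  inker A w /\ w != 0 /\ inker A b /\
  exists (p q : 'cV[int]_n) (eps : int),
    ((p = vpos w /\ q = vneg w) \/ (p = vneg w /\ q = vpos w)) /\
    (eps = 1 \/ eps = -1) /\
    nonneg (p + eps *: b) /\
    norm1 (p + eps *: b - q) < norm1 w.

From mathcomp Require Import all_boot all_order all_algebra.
Import Order.TTheory GRing.Theory Num.Theory.
Local Open Scope ring_scope.

(* In a conformal decomposition z = x + y the sign parts add up, so
   ||z|| = ||x|| + ||y||.  If (p, q) is the pair of sign parts of x with
   p + eps b >= 0 and ||p + eps b - q|| < ||x||, take the matching pair
   (p + p', q + q') of z, where (p', q') are the corresponding sign parts of y.
   Then p + p' + eps b >= 0, and the triangle inequality gives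
   ||p + p' + eps b - (q + q')|| <= ||p + eps b - q|| + ||p' - q'||
   < ||x|| + ||y|| = ||z||. *)

Section SignParts.

Set Implicit Arguments.
Unset Strict Implicit.

Context {n : nat}.
Implicit Types u v w : 'cV[int]_n.

Lemma vpos_ge0 w : nonneg (vpos w).
Proof. by move=> i; rewrite mxE le_max lexx orbT. Qed.

Lemma vneg_ge0 w : nonneg (vneg w).
Proof. by move=> i; rewrite mxE le_max lexx orbT. Qed.

Lemma vpos_sub_vneg w : vpos w - vneg w = w.
Proof.
apply/matrixP => i j; rewrite ord1 !mxE; case: (ltrP (w i 0) 0) => w_sign.
  by rewrite sub0r max_l ?opprK // oppr_ge0 ltW.
by rewrite max_r ?subr0 // oppr_le0.
Qed.

Lemma vpos_add_vneg w i : vpos w i 0 + vneg w i 0 = `|w i 0|.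
Proof.
rewrite !mxE; case: (ltrP (w i 0) 0) => w_sign.
  by rewrite ltr0_norm // add0r max_l // oppr_ge0 ltW.
by rewrite ger0_norm // max_r ?addr0 // oppr_le0.
Qed.

Lemma nonnegD u v : nonneg u -> nonneg v -> nonneg (u + v).
Proof. by move=> u_ge0 v_ge0 i; rewrite mxE addr_ge0. Qed.

Lemma norm1_ge0 u : 0 <= norm1 u.
Proof. exact: sumr_ge0. Qed.

Lemma norm1_eq0 u : (norm1 u == 0) = (u == 0).
Proof.
rewrite psumr_eq0 //; apply/allP/eqP => [u0 | -> i _].
  apply/matrixP => i j; rewrite ord1 mxE.
  by apply/eqP; rewrite -normr_eq0; exact: u0 (mem_index_enum i).
by rewrite mxE normr0.
Qed.

Lemma ler_norm1D u v : norm1 (u + v) <= norm1 u + norm1 v.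
Proof. by rewrite /norm1 -big_split ler_sum // => i _; rewrite mxE ler_normD. Qed.

Lemma norm1N u : norm1 (- u) = norm1 u.
Proof. by apply: eq_bigr => i _; rewrite mxE normrN. Qed.

Lemma norm1_conformal w u v : conformal w u v -> norm1 w = norm1 u + norm1 v.
Proof.
case=> _ [Epos Eneg]; rewrite /norm1 -big_split; apply: eq_bigr => i _ /=.
by rewrite -!vpos_add_vneg Epos Eneg !mxE addrACA.
Qed.

Lemma conformal_neq0 w u v : conformal w u v -> u != 0 -> w != 0.
Proof.
move=> wuv; apply: contra_neq => w0.
have : norm1 u + norm1 v == 0 by rewrite -(norm1_conformal wuv) norm1_eq0 w0.
by rewrite paddr_eq0 ?norm1_ge0 // norm1_eq0 => /andP[/eqP].
Qed.

Lemma shift_reduction (b p q p' q' : 'cV[int]_n) (eps : int) :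
    nonneg (p + eps *: b) -> nonneg p' ->
  nonneg (p + p' + eps *: b) /\
  norm1 (p + p' + eps *: b - (q + q')) <= norm1 (p + eps *: b - q) + norm1 (p' - q').
Proof.
move=> pb_ge0 p'_ge0; split; first by rewrite addrAC; apply: nonnegD.
by rewrite opprD [p + p' + _]addrAC addrACA ler_norm1D.
Qed.

End SignParts.

Theorem lemma7p7 (d n : nat) (A : 'M[int]_(d, n)) (b x y z : 'cV[int]_n) :
  (forall v : 'cV[int]_n, inker A v -> nonneg v -> v = 0) ->
  inker A x -> x != 0 -> inker A b -> reduces_dist A b x ->
  inker A z -> inker A y -> conformal z x y ->
  reduces_dist A b z.
Proof.
move=> _ _ x_neq0 _ [_ [_ [Ab [p [q [eps [pq_sign [eps_unit [pb_ge0 dist_lt]]]]]]]]].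
move=> Az _ zxy; have normz := norm1_conformal zxy.
have [_ [Epos Eneg]] := zxy.
split=> //; split; [exact: conformal_neq0 zxy x_neq0 | split=> //].
have lt_shift (u : 'cV[int]_n) : norm1 u = norm1 y ->
    norm1 (p + eps *: b - q) + norm1 u < norm1 z.
  by move=> ->; rewrite normz ltrD2r.
case: pq_sign => [[-> ->] | [-> ->]] in pb_ge0 lt_shift *.
- have [ge0 le_dist] := shift_reduction (vneg x) (vneg y) pb_ge0 (vpos_ge0 y).
  exists (vpos z), (vneg z), eps; rewrite Epos Eneg.
  do !split; [by left | exact: eps_unit | exact: ge0 | ].
  by apply: le_lt_trans le_dist _; rewrite lt_shift // vpos_sub_vneg.
- have [ge0 le_dist] := shift_reduction (vpos x) (vpos y) pb_ge0 (vneg_ge0 y).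
  exists (vneg z), (vpos z), eps; rewrite Epos Eneg.
  do !split; [by right | exact: eps_unit | exact: ge0 | ].
  by apply: le_lt_trans le_dist _; rewrite lt_shift // -opprB norm1N vpos_sub_vneg.
Qed.
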